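(* For integers $r,k\ge 0$ with $r\ne k$ and real $\alpha>\max\{k,r\}$, $$\sum_{n=1}^\infty\frac{H_{n+\alpha}}{(n+r)(n+k)}=\frac{k-\alpha}{k-r}\left\{\frac{H_{\alpha-k}^2+H_{\alpha-k}^{(2)}}{\alpha-k}-\sum_{j=1}^k\frac{H_{\alpha+j-k}}{j(\alpha+j-k)}\right\}+\frac{\alpha-r}{k-r}\left\{\frac{H_{\alpha-r}^2+H_{\alpha-r}^{(2)}}{\alpha-r}-\sum_{j=1}^r\frac{H_{\alpha+j-r}}{j(\alpha+j-r)}\right\}.$$
   Context: Shifted harmonic numbers: for a real $\alpha$ that is not a negative integer, $H_\alpha := \sum_{k=1}^\infty\left(\frac1k-\frac1{k+\alpha}\right)$ and, for integers $m\ge 2$, $H_\alpha^{(m)} := \sum_{k=1}^\infty\left(\frac1{k^m}-\frac1{(k+\alpha)^m}\right)=\zeta(m)-\zeta(m,\alpha+1)$, where $\zeta$ is the Riemann zeta function and $\zeta(s,\alpha+1)=\sum_{n=1}^\infty (n+\alpha)^{-s}$ is the Hurwitz zeta function. Powers such as $H_\alpha^2$ mean $(H_\alpha)^2$. Empty sums are $0$. *)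

From Stdlib Require Import Reals Lra Lia Classical ClassicalEpsilon.
Open Scope R_scope.

Definition psum1 (f : nat -> R) (N : nat) : R :=
  match N with
  | O => 0
  | S M => sum_f_R0 (fun i => f (S i)) M
  end.

Definition has_sum1 (f : nat -> R) (l : R) : Prop := Un_cv (psum1 f) l.

(* Value of sum_{n=1}^oo f n (0 by convention if divergent; only used
   for convergent series below). *)
Definition series1 (f : nat -> R) : R :=
  match excluded_middle_informative (exists l, has_sum1 f l) with
  | left H => proj1_sig (constructive_indefinite_description _ H)
  | right _ => 0
  end.

(* Shifted harmonic number H_alpha = sum_{k>=1} (1/k - 1/(k+alpha)). *)
Definition Hsh (a : R) : R :=
  series1 (fun k => / INR k - / (INR k + a)).

(* H_alpha^(m) = sum_{k>=1} (1/k^m - 1/(k+alpha)^m). *)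
Definition Hsh_m (m : nat) (a : R) : R :=
  series1 (fun k => / (INR k ^ m) - / ((INR k + a) ^ m)).

Definition fsum1 (n : nat) (g : nat -> R) : R := psum1 g n.

From Stdlib Require Import Reals Lra Lia ClassicalEpsilon.
Open Scope R_scope.

(* Partial fractions turn the series into the difference of two tails of
   S(b) = sum_{p>=1} H_{p+b} (1/p - 1/(p+b)), taken at b = alpha - r and b = alpha - k;
   the omitted first terms are the finite sums of the statement.  The heart of the
   matter is S(b) = H_b^2 + H_b^(2) for b >= 0.

   Let P_N and Q_N be the partial sums of H_b and H_b^(2).  Since H_{p+b} = H_b + H_p - P_p,
   the partial sums of S(b) equal X_N + H_b P_N - P_N^2/2 + Q_N/2, where
   X_N = sum_{n<=N} H_{n-1} (1/n - 1/(n+b)).  The identity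
   (1/p - 1/(p+b)) (1/q - 1/(p+q+b)) = (1/n - 1/(n+b)) (1/p + 1/q),   n = p + q,
   shows that 2 X_N is the diagonal part sum_{p<=N} (1/p - 1/(p+b)) P^{(p+b)}_{N-p} of a
   Cauchy product; it lies below the N-th partial sum of S(b) and, for N large, above any
   fixed partial sum.  Hence S(b) = 2 lim X_N, and the decomposition above then forces
   lim X_N = (H_b^2 + H_b^(2)) / 2. *)

Fixpoint sum1 (f : nat -> R) (N : nat) : R :=
  match N with O => 0 | S n => sum1 f n + f (S n) end.

Lemma psum1_sum1 f N : psum1 f N = sum1 f N.
Proof.
  destruct N as [|M]; [reflexivity|]. simpl.
  induction M as [|M IH]; simpl; [lra|]. rewrite IH. reflexivity.
Qed.

Lemma sum1_ext f g N :
  (forall i, (1 <= i <= N)%nat -> f i = g i) -> sum1 f N = sum1 g N.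
Proof.
  induction N as [|N IH]; intros H; simpl; [reflexivity|].
  rewrite IH, (H (S N)) by (intros; try apply H; lia). reflexivity.
Qed.

Lemma sum1_plus f g N : sum1 (fun i => f i + g i) N = sum1 f N + sum1 g N.
Proof. induction N as [|N IH]; simpl; [lra|]. rewrite IH. ring. Qed.

Lemma sum1_minus f g N : sum1 (fun i => f i - g i) N = sum1 f N - sum1 g N.
Proof. induction N as [|N IH]; simpl; [lra|]. rewrite IH. ring. Qed.

Lemma sum1_scal c f N : sum1 (fun i => c * f i) N = c * sum1 f N.
Proof. induction N as [|N IH]; simpl; [lra|]. rewrite IH. ring. Qed.

Lemma sum1_le f g N :
  (forall i, (1 <= i <= N)%nat -> f i <= g i) -> sum1 f N <= sum1 g N.
Proof.
  induction N as [|N IH]; intros H; simpl; [lra|].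
  pose proof (IH ltac:(intros; apply H; lia)). pose proof (H (S N) ltac:(lia)). lra.
Qed.

Lemma sum1_growing f : (forall i, (1 <= i)%nat -> 0 <= f i) -> Un_growing (sum1 f).
Proof. intros H n. simpl. pose proof (H (S n) ltac:(lia)). lra. Qed.

Lemma sum1_nonneg f N : (forall i, (1 <= i)%nat -> 0 <= f i) -> 0 <= sum1 f N.
Proof. intros H. apply (tech9 _ (sum1_growing f H) 0 N). lia. Qed.

Lemma sum1_rev g n : sum1 (fun p => g (S n - p)%nat) n = sum1 g n.
Proof.
  induction n as [|n IH]; [reflexivity|].
  assert (Hfirst : forall f m, sum1 f (S m) = f 1%nat + sum1 (fun i => f (S i)) m).
  { intros f m; induction m as [|m IHm]; simpl in *; [lra|]. rewrite IHm. ring. }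
  rewrite Hfirst. simpl (S (S n) - 1)%nat. simpl in IH |- *. rewrite IH. ring.
Qed.

Lemma sum1_tail c m N : sum1 (fun n => c (n + m)%nat) N = sum1 c (N + m) - sum1 c m.
Proof. induction N as [|N IH]; simpl; [lra|]. rewrite IH. ring. Qed.

Lemma has_sum1_sum1 f l : has_sum1 f l <-> Un_cv (sum1 f) l.
Proof.
  unfold has_sum1, Un_cv. split; intros H e He; destruct (H e He) as [N HN];
    exists N; intros n Hn; specialize (HN n Hn); rewrite psum1_sum1 in *; auto.
Qed.

Lemma series1_cv f : (exists l, Un_cv (sum1 f) l) -> Un_cv (sum1 f) (series1 f).
Proof.
  intros Hex. unfold series1. destruct excluded_middle_informative as [e|n].
  - destruct (constructive_indefinite_description _ e) as [l Hl]. simpl.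
    now apply has_sum1_sum1.
  - exfalso. destruct Hex as [l Hl]. apply n. exists l. now apply has_sum1_sum1.
Qed.

Lemma Un_cv_ext u v l : (forall n, u n = v n) -> Un_cv u l -> Un_cv v l.
Proof.
  intros E H e He; destruct (H e He) as [N HN]; exists N; intros n Hn.
  rewrite <- E; auto.
Qed.

Lemma Un_cv_const c : Un_cv (fun _ => c) c.
Proof. intros e He; exists O; intros; unfold R_dist; rewrite Rminus_diag, Rabs_R0; lra. Qed.

Lemma Un_cv_scal c u l : Un_cv u l -> Un_cv (fun n => c * u n) (c * l).
Proof. intros H; apply CV_mult; [apply Un_cv_const|exact H]. Qed.

Lemma Un_cv_shift_sub u l m : Un_cv u l -> Un_cv (fun N => u (N - m)%nat) l.
Proof.
  intros H. apply (CV_shift _ m). apply Un_cv_ext with u; [|exact H].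
  intros n. f_equal. lia.
Qed.

Definition hterm (x : R) (k : nat) : R := / INR k - / (INR k + x).
Definition hterm2 (x : R) (k : nat) : R := / (INR k ^ 2) - / ((INR k + x) ^ 2).
Definition Hpsum (x : R) : nat -> R := sum1 (hterm x).
Definition Hpsum2 (x : R) : nat -> R := sum1 (hterm2 x).
Definition harm : nat -> R := sum1 (fun i => / INR i).

Lemma INR_ge1 k : (1 <= k)%nat -> 1 <= INR k.
Proof. intros H. apply le_INR in H. exact H. Qed.

Lemma sum1_telescope N : sum1 (hterm 1) N = 1 - / (INR N + 1).
Proof.
  induction N as [|N IH]; cbn [sum1].
  - simpl. rewrite Rplus_0_l, Rinv_1. ring.
  - rewrite IH. unfold hterm. rewrite S_INR. ring.
Qed.

Lemma sum1_cv_dominated f c :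
  (forall k, (1 <= k)%nat -> 0 <= f k <= c / INR k ^ 2) ->
  exists l, Un_cv (sum1 f) l.
Proof.
  intros Hf.
  assert (Hc : 0 <= c).
  { destruct (Hf 1%nat (le_n 1)) as [H0 H1]. simpl in H1. lra. }
  assert (Hdom : forall k, (1 <= k)%nat -> f k <= 2 * c * hterm 1 k).
  { intros k Hk. pose proof (INR_ge1 k Hk). destruct (Hf k Hk) as [_ Hle].
    eapply Rle_trans; [exact Hle|]. unfold hterm.
    replace (2 * c * (/ INR k - / (INR k + 1))) with (c / INR k ^ 2 * (2 * INR k / (INR k + 1)))
      by (field; lra).
    rewrite <- (Rmult_1_r (c / INR k ^ 2)) at 1. apply Rmult_le_compat_l.
    - apply Rmult_le_pos; [lra|]. apply Rlt_le, Rinv_0_lt_compat, pow_lt. lra.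
    - apply Rmult_le_reg_r with (INR k + 1); [lra|]. field_simplify; lra. }
  assert (Hub : has_ub (sum1 f)).
  { exists (2 * c). intros y [N ->].
    eapply Rle_trans; [apply sum1_le with (g := fun k => 2 * c * hterm 1 k)|].
    - intros i Hi. apply Hdom. lia.
    - rewrite sum1_scal, sum1_telescope.
      assert (0 < / (INR N + 1)) by (apply Rinv_0_lt_compat; pose proof (pos_INR N); lra).
      nra. }
  assert (Hgr : Un_growing (sum1 f)) by (apply sum1_growing; intros; apply Hf; lia).
  destruct (growing_cv _ Hgr Hub) as [l Hl]. now exists l.
Qed.

Lemma hterm_bounds x k : 0 <= x -> (1 <= k)%nat -> 0 <= hterm x k <= x / INR k ^ 2.
Proof.
  intros Hx Hk. pose proof (INR_ge1 k Hk). unfold hterm.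
  replace (/ INR k - / (INR k + x)) with (x / (INR k * (INR k + x))) by (field; lra).
  split.
  - apply Rmult_le_pos; [lra|]. apply Rlt_le, Rinv_0_lt_compat. nra.
  - unfold Rdiv. apply Rmult_le_compat_l; [lra|]. simpl. rewrite Rmult_1_r.
    apply Rinv_le_contravar; nra.
Qed.

Lemma hterm2_bounds x k : 0 <= x -> (1 <= k)%nat -> 0 <= hterm2 x k <= 1 / INR k ^ 2.
Proof.
  intros Hx Hk. pose proof (INR_ge1 k Hk). unfold hterm2.
  assert (Hle : / ((INR k + x) ^ 2) <= / (INR k ^ 2)).
  { apply Rinv_le_contravar; [apply pow_lt; lra|]. apply pow_incr. lra. }
  assert (0 < / ((INR k + x) ^ 2)) by (apply Rinv_0_lt_compat, pow_lt; lra).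
  unfold Rdiv. lra.
Qed.

Lemma Hpsum_cv x : 0 <= x -> Un_cv (Hpsum x) (Hsh x).
Proof. intros Hx. apply series1_cv, (sum1_cv_dominated _ x). intros k Hk. now apply hterm_bounds.
Qed.

Lemma Hpsum2_cv x : 0 <= x -> Un_cv (Hpsum2 x) (Hsh_m 2 x).
Proof. intros Hx. apply series1_cv, (sum1_cv_dominated _ 1). intros k Hk. now apply hterm2_bounds.
Qed.

Lemma Hpsum_nonneg x N : 0 <= x -> 0 <= Hpsum x N.
Proof. intros Hx. apply sum1_nonneg. intros i Hi. now apply hterm_bounds. Qed.

Lemma Hpsum_le_Hsh x N : 0 <= x -> Hpsum x N <= Hsh x.
Proof.
  intros Hx. apply growing_ineq; [|now apply Hpsum_cv].
  apply sum1_growing. intros i Hi. now apply hterm_bounds.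
Qed.

Lemma Hpsum2_le_Hsh_m x N : 0 <= x -> Hpsum2 x N <= Hsh_m 2 x.
Proof.
  intros Hx. apply growing_ineq; [|now apply Hpsum2_cv].
  apply sum1_growing. intros i Hi. now apply hterm2_bounds.
Qed.

Lemma Hsh_succ x : 0 <= x -> Hsh (x + 1) = Hsh x + / (x + 1).
Proof.
  intros Hx. apply (UL_sequence (Hpsum (x + 1))); [apply Hpsum_cv; lra|].
  assert (Hpsum_succ : forall N, Hpsum (x + 1) N = Hpsum x N + / (x + 1) - / (INR N + 1 + x)).
  { induction N as [|N IH]; unfold Hpsum, hterm in *; cbn [sum1].
    - simpl. field. lra.
    - rewrite IH, S_INR. pose proof (pos_INR N). field. lra. }
  apply Un_cv_ext with (fun N => (Hpsum x N + / (x + 1)) - / (INR N + 1 + x)).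
  { intros N. now rewrite Hpsum_succ. }
  rewrite <- (Rminus_0_r (Hsh x + / (x + 1))).
  apply CV_minus; [apply CV_plus; [now apply Hpsum_cv|apply Un_cv_const]|].
  apply cv_infty_cv_0. intros M. destruct (INR_unbounded M) as [N HN].
  exists N. intros n Hn. apply le_INR in Hn. lra.
Qed.

Lemma Hsh_add_nat x j : 0 <= x -> Hsh (INR j + x) = Hsh x + harm j - Hpsum x j.
Proof.
  intros Hx. induction j as [|j IH].
  - unfold harm, Hpsum. simpl. rewrite Rplus_0_l. ring.
  - pose proof (pos_INR j). rewrite S_INR.
    replace (INR j + 1 + x) with (INR j + x + 1) by ring.
    rewrite Hsh_succ, IH by lra. unfold harm, Hpsum, hterm. cbn [sum1]. rewrite S_INR.
    replace (INR j + x + 1) with (INR j + 1 + x) by ring. ring.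
Qed.

Definition Hsh_hterm (b : R) (p : nat) : R := Hsh (INR p + b) * hterm b p.

Lemma hterm_mul_hterm b p q : 0 <= b -> (1 <= p)%nat -> (1 <= q)%nat ->
  hterm b p * hterm (INR p + b) q = hterm b (p + q) * (/ INR p + / INR q).
Proof.
  intros Hb Hp Hq. pose proof (INR_ge1 p Hp). pose proof (INR_ge1 q Hq).
  unfold hterm. rewrite plus_INR. field. repeat split; lra.
Qed.

Section HshSquare.

Variable b : R.
Hypothesis Hb : 0 <= b.

Definition conv_partial (M N : nat) : R :=
  sum1 (fun p => hterm b p * Hpsum (INR p + b) (N - p)) M.

Definition harm_psum : nat -> R := sum1 (fun n => harm (pred n) * hterm b n).

Lemma hterm_nonneg p : (1 <= p)%nat -> 0 <= hterm b p.
Proof. intros Hp. now apply hterm_bounds. Qed.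

Lemma conv_summand_nonneg N p : (1 <= p)%nat -> 0 <= hterm b p * Hpsum (INR p + b) N.
Proof.
  intros Hp. apply Rmult_le_pos; [now apply hterm_nonneg|].
  apply Hpsum_nonneg. pose proof (pos_INR p). lra.
Qed.

Lemma conv_partial_diag N : conv_partial N N = 2 * harm_psum N.
Proof.
  induction N as [|N IH]; [unfold conv_partial, harm_psum; simpl; ring|].
  unfold conv_partial. cbn [sum1]. rewrite Nat.sub_diag. unfold Hpsum at 2. cbn [sum1].
  rewrite Rmult_0_r, Rplus_0_r.
  rewrite (sum1_ext _ (fun p => hterm b p * Hpsum (INR p + b) (N - p)
                                + hterm b (S N) * (/ INR p + / INR (S N - p)))).
  2:{ intros p Hp. replace (S N - p)%nat with (S (N - p)) at 1 by lia.
      unfold Hpsum at 1. cbn [sum1]. fold (Hpsum (INR p + b) (N - p)).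
      rewrite Rmult_plus_distr_l, hterm_mul_hterm by (exact Hb || lia).
      replace (p + S (N - p))%nat with (S N) by lia.
      now replace (S (N - p)) with (S N - p)%nat by lia. }
  rewrite sum1_plus, sum1_scal, sum1_plus, (sum1_rev (fun q => / INR q) N).
  fold (conv_partial N N). rewrite IH.
  unfold harm_psum, harm. cbn [sum1 pred]. ring.
Qed.

Lemma conv_partial_le M N : (M <= N)%nat -> conv_partial M N <= conv_partial N N.
Proof.
  intros HMN. apply (tech9 (fun m => conv_partial m N)); [|exact HMN].
  apply sum1_growing. intros p Hp. now apply conv_summand_nonneg.
Qed.

Lemma conv_partial_cv M : Un_cv (conv_partial M) (sum1 (Hsh_hterm b) M).
Proof.
  induction M as [|M IH]; [apply Un_cv_const|].
  unfold conv_partial, Hsh_hterm. cbn [sum1]. apply CV_plus; [exact IH|].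
  rewrite Rmult_comm. apply Un_cv_scal, (Un_cv_shift_sub (Hpsum (INR (S M) + b))).
  apply Hpsum_cv. pose proof (pos_INR (S M)). lra.
Qed.

Lemma conv_partial_diag_le N : conv_partial N N <= sum1 (Hsh_hterm b) N.
Proof.
  apply sum1_le. intros p Hp. unfold Hsh_hterm. rewrite (Rmult_comm (Hsh _)).
  apply Rmult_le_compat_l; [apply hterm_nonneg; lia|].
  apply Hpsum_le_Hsh. pose proof (pos_INR p). lra.
Qed.

Lemma sum1_Hsh_hterm_eq N :
  sum1 (Hsh_hterm b) N
  = harm_psum N + (Hsh b * Hpsum b N - Hpsum b N ^ 2 / 2 + Hpsum2 b N / 2).
Proof.
  induction N as [|N IH]; [unfold harm_psum, Hpsum, Hpsum2; simpl; field|].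
  cbn [sum1]. rewrite IH. unfold Hsh_hterm. rewrite Hsh_add_nat by exact Hb.
  unfold harm_psum, Hpsum, Hpsum2, harm, hterm, hterm2. cbn [sum1 pred].
  pose proof (INR_ge1 (S N) ltac:(lia)). field. lra.
Qed.

Lemma Hsh_hterm_cv : Un_cv (sum1 (Hsh_hterm b)) (Hsh b ^ 2 + Hsh_m 2 b).
Proof.
  set (D N := Hsh b * Hpsum b N - Hpsum b N ^ 2 / 2 + Hpsum2 b N / 2).
  set (L := Hsh b * Hsh b - Hsh b * Hsh b / 2 + Hsh_m 2 b / 2).
  assert (HD : Un_cv D L).
  { unfold D, L, Rdiv. simpl.
    apply CV_plus; [apply CV_minus|apply CV_mult; [|apply Un_cv_const]].
    - apply Un_cv_scal, Hpsum_cv, Hb.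
    - apply CV_mult; [|apply Un_cv_const].
      apply Un_cv_ext with (fun N => Hpsum b N * Hpsum b N); [intros; ring|].
      apply CV_mult; apply Hpsum_cv, Hb.
    - apply Hpsum2_cv, Hb. }
  assert (Hsplit : forall N, sum1 (Hsh_hterm b) N = harm_psum N + D N)
    by (intros; apply sum1_Hsh_hterm_eq).
  assert (Hdiag : forall N, 2 * harm_psum N <= sum1 (Hsh_hterm b) N)
    by (intros; rewrite <- conv_partial_diag; apply conv_partial_diag_le).
  assert (Hgrowing : Un_growing harm_psum).
  { apply sum1_growing. intros n Hn. apply Rmult_le_pos; [|now apply hterm_nonneg].
    apply sum1_nonneg. intros i Hi. apply Rlt_le, Rinv_0_lt_compat.
    pose proof (INR_ge1 i Hi). lra. }
  assert (Hbounded : has_ub harm_psum).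
  { exists (Hsh b * Hsh b + Hsh_m 2 b / 2). intros y [N ->].
    specialize (Hdiag N). rewrite Hsplit in Hdiag. unfold D in Hdiag.
    pose proof (Hpsum_le_Hsh b N Hb). pose proof (Hpsum_nonneg b N Hb).
    pose proof (Hpsum2_le_Hsh_m b N Hb).
    assert (Hsh b * Hpsum b N <= Hsh b * Hsh b) by (apply Rmult_le_compat_l; lra).
    assert (0 <= Hpsum b N ^ 2) by (apply pow_le; lra). lra. }
  destruct (growing_cv _ Hgrowing Hbounded) as [F HF].
  assert (HC : Un_cv (sum1 (Hsh_hterm b)) (F + L)).
  { apply Un_cv_ext with (fun N => harm_psum N + D N); [intros; now rewrite Hsplit|].
    now apply CV_plus. }
  assert (H2F : Un_cv (fun N => 2 * harm_psum N) (2 * F)) by now apply Un_cv_scal.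
  assert (Hupper : F + L <= 2 * F).
  { apply (Rle_cv_lim (Un := sum1 (Hsh_hterm b)) (Vn := fun _ => 2 * F));
      [|exact HC|apply Un_cv_const].
    intros M. apply (Rle_cv_lim (Un := fun N => conv_partial M (N + M))
                               (Vn := fun N => 2 * harm_psum (N + M))).
    - intros N. rewrite <- conv_partial_diag. apply conv_partial_le. lia.
    - apply (CV_shift' (conv_partial M)), conv_partial_cv.
    - apply (CV_shift' (fun N => 2 * harm_psum N)), H2F. }
  assert (Hlower : 2 * F <= F + L) by exact (Rle_cv_lim Hdiag H2F HC).
  replace (Hsh b ^ 2 + Hsh_m 2 b) with (F + L) by (unfold L in *; simpl; lra).
  exact HC.
Qed.

End HshSquare.

Lemma Hsh_hterm_tail_cv b m : 0 <= b ->
  Un_cv (sum1 (fun n => Hsh_hterm b (n + m)))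
        (Hsh b ^ 2 + Hsh_m 2 b - sum1 (Hsh_hterm b) m).
Proof.
  intros Hb. apply Un_cv_ext with (fun N => sum1 (Hsh_hterm b) (N + m) - sum1 (Hsh_hterm b) m).
  { intros N. now rewrite sum1_tail. }
  apply CV_minus; [|apply Un_cv_const].
  apply (CV_shift' (sum1 (Hsh_hterm b))), Hsh_hterm_cv, Hb.
Qed.

Lemma sum1_Hsh_hterm_fsum1 alpha m : INR m < alpha ->
  sum1 (Hsh_hterm (alpha - INR m)) m
  = (alpha - INR m) * fsum1 m (fun j => Hsh (alpha + INR j - INR m)
                                         / (INR j * (alpha + INR j - INR m))).
Proof.
  intros Hm. unfold fsum1. rewrite psum1_sum1, <- sum1_scal. apply sum1_ext. intros j Hj.
  unfold Hsh_hterm, hterm. replace (INR j + (alpha - INR m)) with (alpha + INR j - INR m) by ring.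
  pose proof (INR_ge1 j ltac:(lia)). field. lra.
Qed.

Lemma Hsh_hterm_partial_fraction alpha r k n :
  INR r < alpha -> INR k < alpha -> INR k <> INR r -> (1 <= n)%nat ->
  Hsh (INR n + alpha) / ((INR n + INR r) * (INR n + INR k))
  = / (INR k - INR r)
    * (Hsh_hterm (alpha - INR r) (n + r) - Hsh_hterm (alpha - INR k) (n + k)).
Proof.
  intros Hr Hk Hkr Hn. unfold Hsh_hterm, hterm. rewrite !plus_INR.
  replace (INR n + INR r + (alpha - INR r)) with (INR n + alpha) by ring.
  replace (INR n + INR k + (alpha - INR k)) with (INR n + alpha) by ring.
  pose proof (INR_ge1 n Hn). pose proof (pos_INR r). pose proof (pos_INR k).
  field. repeat split; lra.
Qed.

Theorem theorem2p2 (r k : nat) (alpha : R) :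
  r <> k -> alpha > INR k -> alpha > INR r ->
  has_sum1 (fun n => Hsh (INR n + alpha) / ((INR n + INR r) * (INR n + INR k)))
    ((INR k - alpha) / (INR k - INR r) *
       ((Hsh (alpha - INR k) ^ 2 + Hsh_m 2 (alpha - INR k)) / (alpha - INR k)
        - fsum1 k (fun j => Hsh (alpha + INR j - INR k)
                             / (INR j * (alpha + INR j - INR k))))
     + (alpha - INR r) / (INR k - INR r) *
       ((Hsh (alpha - INR r) ^ 2 + Hsh_m 2 (alpha - INR r)) / (alpha - INR r)
        - fsum1 r (fun j => Hsh (alpha + INR j - INR r)
                             / (INR j * (alpha + INR j - INR r))))).
Proof.
  intros Hrk Hk Hr.
  assert (Hkr : INR k <> INR r) by (intro E; apply Hrk; symmetry; now apply INR_eq).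
  apply has_sum1_sum1.
  apply Un_cv_ext with (fun N => / (INR k - INR r) *
     (sum1 (fun n => Hsh_hterm (alpha - INR r) (n + r)) N
      - sum1 (fun n => Hsh_hterm (alpha - INR k) (n + k)) N)).
  { intros N. rewrite <- sum1_minus, <- sum1_scal. apply sum1_ext. intros n Hn.
    symmetry. apply Hsh_hterm_partial_fraction; lra || lia. }
  pose proof (sum1_Hsh_hterm_fsum1 alpha r Hr) as Er.
  pose proof (sum1_Hsh_hterm_fsum1 alpha k Hk) as Ek.
  set (fr := fsum1 r _) in *. set (fk := fsum1 k _) in *.
  replace (_ + _) with (/ (INR k - INR r) *
     ((Hsh (alpha - INR r) ^ 2 + Hsh_m 2 (alpha - INR r) - sum1 (Hsh_hterm (alpha - INR r)) r)
      - (Hsh (alpha - INR k) ^ 2 + Hsh_m 2 (alpha - INR k) - sum1 (Hsh_hterm (alpha - INR k)) k))).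
  2:{ rewrite Er, Ek. field. repeat split; lra. }
  apply Un_cv_scal, CV_minus; apply Hsh_hterm_tail_cv; lra.
Qed.
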